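(* Let $(\Omega,\mathcal{A})$ be a measurable space, $\Theta:=\mathfrak{P}(\Omega)$ the set of all probability measures on it, and let $H_1,\dots,H_K\subseteq\Theta$ ($K\ge2$) be hypotheses with \textit{e}-variables $E_1,\dots,E_K$, where $E_k$ is an \textit{e}-variable for $H_k$. Let $F$ be a symmetric \textit{e}-merging function. For $\theta\in\Theta$ let $I_\theta:=\{k:\theta\in H_k\}$, $E_\theta:=F(E_k:k\in I_\theta)$, and for $R\subseteq\{1,\dots,K\}$ let $g_R(\theta):=|R\setminus I_\theta|$. For $R\subseteq\{1,\dots,K\}$ and $j\in\{1,2,\dots\}$ let \[ D^R(j):=\min_{I\subseteq\{1,\dots,K\}:\ |R\setminus I|<j}F(E_k:k\in I)\quad(\min\emptyset:=\infty), \] a random variable. Then: (a) pointwise on $\Omega$, $D^R(j)\le \inf_{\theta\in\Theta:\ g_R(\theta)<j}E_\theta$ for all $R$ and $j$, with equality for all $R,j$ if the map $\theta\mapsto I_\theta$ from $\Theta$ to the power set of $\{1,\dots,K\}$ is surjective; (b) for every $\theta\in\Theta$ and every $\alpha>0$, \[ Q_\theta\Bigl(\exists R\subseteq\{1,\dots,K\},\ \exists j\ge1:\ g_R(\theta)<j \text{ and } D^R(j)\ge\alpha\Bigr)\le 1/\alpha . \]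
   Context: An \textit{e}-variable for a hypothesis $H\subseteq\Theta$ is a nonnegative extended random variable $E$ with $\int E\,\mathrm{d}\theta\le 1$ for all $\theta\in H$. An \textit{e}-merging function is a Borel function $F:\bigcup_{n=0}^\infty[0,\infty]^n\to[0,\infty]$, increasing in each argument, mapping any finite sequence of \textit{e}-variables (for a fixed probability measure) to an \textit{e}-variable; $F$ of the empty sequence is $1$. It is symmetric if it does not depend on the order of its arguments. Here $Q_\theta=\theta$. *)

From HB Require Import structures.
From mathcomp Require Import all_boot all_order all_algebra.
From mathcomp Require Import all_classical all_reals all_analysis measurable_realfun.
Set Implicit Arguments.
Unset Strict Implicit.
Unset Printing Implicit Defensive.
Import Order.TTheory GRing.Theory Num.Theory.
Local Open Scope classical_set_scope.
Local Open Scope ring_scope.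
Local Open Scope ereal_scope.

Definition e_variable {d : measure_display} {T : measurableType d}
  {R : realType} (H : set (probability T R)) (E : T -> \bar R) : Prop :=
  [/\ measurable_fun [set: T] E,
      (forall x, 0 <= E x) &
      (forall theta : probability T R, H theta -> \int[theta]_x E x <= 1)].

Definition e_merging {R : realType} (F : seq (\bar R) -> \bar R) : Prop :=
  [/\
      F [::] = 1,
      (forall s : seq (\bar R), all (fun x => 0 <= x) s -> 0 <= F s),
      (* Borel on each [0, +oo]^n (product sigma-algebra on n-tuples) *)
      (forall n : nat,
         measurable_fun [set t : n.-tuple (\bar R) | forall i, 0 <= tnth t i]
                        (fun t => F (tval t))),
      (forall (s : seq (\bar R)) (i : nat) (x y : \bar R),
         all (fun z => 0 <= z) s -> (i < size s)%N -> 0 <= x -> x <= y ->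
         F (set_nth 0 s i x) <= F (set_nth 0 s i y)) &
      (* maps e-variables (for a fixed probability measure, on any
         probability space) to an e-variable *)
      (forall (d' : measure_display) (T' : measurableType d')
              (P : probability T' R) (Es : seq (T' -> \bar R)),
         (forall E, E \in Es -> e_variable [set P] E) ->
         e_variable [set P] (fun w => F [seq E w | E <- Es]))].

Definition symmetric_fun {R : realType} (F : seq (\bar R) -> \bar R) : Prop :=
  forall s t : seq (\bar R), perm_eq s t -> F s = F t.

Definition FI {T : Type} {R : realType} {K : nat} (F : seq (\bar R) -> \bar R)
  (E : 'I_K -> T -> \bar R) (I : {set 'I_K}) (w : T) : \bar R :=
  F [seq E k w | k <- enum I].

Definition Itheta {d : measure_display} {T : measurableType d} {R : realType}
  {K : nat} (H : 'I_K -> set (probability T R)) (theta : probability T R)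
  : {set 'I_K} := [set k | `[< H k theta >] ].

Definition Etheta {d : measure_display} {T : measurableType d} {R : realType}
  {K : nat} (F : seq (\bar R) -> \bar R) (H : 'I_K -> set (probability T R))
  (E : 'I_K -> T -> \bar R) (theta : probability T R) : T -> \bar R :=
  FI F E (Itheta H theta).

Definition gR {d : measure_display} {T : measurableType d} {R : realType}
  {K : nat} (H : 'I_K -> set (probability T R)) (Rs : {set 'I_K})
  (theta : probability T R) : nat := #|Rs :\: Itheta H theta|.

Definition DR {T : Type} {R : realType} {K : nat} (F : seq (\bar R) -> \bar R)
  (E : 'I_K -> T -> \bar R) (Rs : {set 'I_K}) (j : nat) (w : T) : \bar R :=
  \big[mine/+oo]_(I : {set 'I_K} | (#|Rs :\: I| < j)%N) FI F E I w.

From HB Require Import structures.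
From mathcomp Require Import all_boot all_order all_algebra.
From mathcomp Require Import all_classical all_reals all_analysis measurable_realfun.
Set Implicit Arguments.
Unset Strict Implicit.
Unset Printing Implicit Defensive.
Import Order.TTheory GRing.Theory Num.Theory.
Local Open Scope classical_set_scope.
Local Open Scope ring_scope.
Local Open Scope ereal_scope.

(* If g_R(theta) < j then I_theta is one of the index sets over which D^R(j)
   minimises, so D^R(j) <= E_theta; when theta |-> I_theta is onto, every such
   index set arises, giving equality in (a).  For (b), the event therefore lies
   in {E_theta >= alpha}.  Since F merges the e-variables E_k, k in I_theta, all
   valid under theta, E_theta is an e-variable for theta, and Markov's
   inequality bounds the probability by 1/alpha. *)

Lemma DR_le_FI (T : Type) (R : realType) (K : nat) (F : seq (\bar R) -> \bar R)
    (E : 'I_K -> T -> \bar R) (Rs I : {set 'I_K}) (j : nat) (w : T) :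
  (#|Rs :\: I| < j)%N -> DR F E Rs j w <= FI F E I w.
Proof. exact: (bigmin_le_cond _ (P := fun I => #|Rs :\: I| < j)%N). Qed.

Section DR_measurable.
Variables (d : measure_display) (T : measurableType d) (R : realType) (K : nat).
Variables (F : seq (\bar R) -> \bar R) (E : 'I_K -> T -> \bar R).
Hypotheses (hF : e_merging F) (mE : forall k, measurable_fun setT (E k))
  (E0 : forall k w, 0 <= E k w).

Lemma measurable_fun_FI (I : {set 'I_K}) : measurable_fun setT (FI F E I).
Proof.
case: hF => _ _ mF _ _.
pose g w := map_tuple (E^~ w) (enum_tuple (mem I)).
have -> : FI F E I = (fun t : #|mem I|.-tuple (\bar R) => F (tval t)) \o g by [].
apply: (measurable_comp _ _ (mF _)).
- rewrite [X in measurable X](_ : _ = \bigcap_(i in setT) [set t | 0 <= tnth t i]).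
    apply: fin_bigcap_measurable => // i _; rewrite -[X in measurable X]setTI.
    by apply: emeasurable_fun_c_infty => //; exact: measurable_tnth.
  by apply/seteqP; split=> t /= t0 i => [_|]; [exact: t0 | exact: t0].
- by move=> _ [w _ <-] i; rewrite tnth_map.
- apply/measurable_fun_tnthP => i.
  rewrite (_ : _ \o g = E (tnth (enum_tuple (mem I)) i)) //.
  by apply: funext => w /=; rewrite tnth_map.
Qed.

Lemma measurable_DR_ge (a : \bar R) (Rs : {set 'I_K}) (j : nat) :
  measurable [set w | a <= DR F E Rs j w].
Proof.
rewrite [X in measurable X](_ : _ = \bigcap_(I in [set I | #|Rs :\: I| < j]%N)
                                      [set w | a <= FI F E I w]).
  apply: fin_bigcap_measurable => // I _; rewrite -[X in measurable X]setTI.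
  by apply: emeasurable_fun_c_infty => //; exact: measurable_fun_FI.
apply/seteqP; split=> w /=.
  by move=> /bigmin_geP[_ aFI] I; exact: aFI.
by move=> aFI; apply/bigmin_geP; split=> [|I RsI]; [exact: leey | exact: aFI].
Qed.

Lemma measurable_DR_ge_some (P : {set 'I_K} -> nat -> Prop) (a : \bar R) :
  measurable [set w | exists Rs j, P Rs j /\ a <= DR F E Rs j w].
Proof.
rewrite [X in measurable X](_ : _ = \bigcup_j \bigcup_(Rs in [set Rs | P Rs j])
                                      [set w | a <= DR F E Rs j w]).
  apply: bigcupT_measurable => j.
  by apply: fin_bigcup_measurable => // Rs _; exact: measurable_DR_ge.
apply/seteqP; split=> w /=.
  by move=> [Rs [j [PRsj aD]]]; exists j => //; exists Rs.
by move=> [j _ [Rs PRsj aD]]; exists Rs, j.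
Qed.

End DR_measurable.

Lemma e_variable_markov (d : measure_display) (T : measurableType d)
    (R : realType) (H : set (probability T R)) (P : probability T R)
    (X : T -> \bar R) (alpha : R) :
  H P -> e_variable H X -> (0 < alpha)%R ->
  P [set w | alpha%:E <= X w] <= alpha^-1%:E.
Proof.
move=> HP [mX X0 intX] alpha0.
have markov : alpha%:E * P [set w | alpha%:E <= X w] <= 1.
  apply: le_trans (intX P HP).
  have Xabs : X = (fun w => `|X w|) by apply: funext => w; rewrite gee0_abs ?X0.
  rewrite {1 2}Xabs /=.
  by have := le_integral_abse P measurableT mX alpha0; rewrite setTI.
rewrite -(@lee_pmul2l _ alpha%:E) ?lte_fin // -EFinM mulfV ?gt_eqF //.
Qed.

Section merged_hypotheses.
Variables (d : measure_display) (T : measurableType d) (R : realType) (K : nat).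
Variables (H : 'I_K -> set (probability T R)) (E : 'I_K -> T -> \bar R).
Variable F : seq (\bar R) -> \bar R.

Lemma DR_le_einf_Etheta (Rs : {set 'I_K}) (j : nat) (w : T) :
  DR F E Rs j w <=
  ereal_inf [set Etheta F H E theta w | theta in [set theta | (gR H Rs theta < j)%N]].
Proof. by apply/ereal_infP => _ [theta /= gRj <-]; exact: DR_le_FI. Qed.

Lemma DR_eq_einf_Etheta (Rs : {set 'I_K}) (j : nat) (w : T) :
  (forall I : {set 'I_K}, exists theta, Itheta H theta = I) ->
  DR F E Rs j w =
  ereal_inf [set Etheta F H E theta w | theta in [set theta | (gR H Rs theta < j)%N]].
Proof.
move=> Itheta_onto; apply/eqP; rewrite eq_le DR_le_einf_Etheta /=.
apply: le_bigmin => [|I RsI]; first exact: leey.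
have [theta thetaI] := Itheta_onto I.
by apply: ereal_inf_lbound; exists theta; rewrite /= /gR /Etheta thetaI.
Qed.

Hypotheses (hE : forall k, e_variable (H k) (E k)) (hF : e_merging F).

Lemma e_variable_Etheta (theta : probability T R) :
  e_variable [set theta] (Etheta F H E theta).
Proof.
case: hF => _ _ _ _ /(_ _ _ theta [seq E k | k <- enum (Itheta H theta)]).
rewrite (_ : (fun w => _) = Etheta F H E theta); last first.
  by apply: funext => w; rewrite /Etheta /FI -map_comp.
apply=> _ /mapP[k + ->]; rewrite mem_enum inE => /asboolP Hk_theta.
by case: (hE k) => mEk Ek0 intEk; split=> // _ ->; exact: intEk.
Qed.

Lemma DR_exceed_le (theta : probability T R) (alpha : R) : (0 < alpha)%R ->
  theta [set w | exists (Rs : {set 'I_K}) (j : nat),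
                   [/\ (0 < j)%N, (gR H Rs theta < j)%N & alpha%:E <= DR F E Rs j w]]
  <= alpha^-1%:E.
Proof.
move=> alpha0.
have mE k : measurable_fun setT (E k) by case: (hE k).
have E0 k w : 0 <= E k w by case: (hE k).
have mA := measurable_DR_ge_some hF mE E0
  (fun Rs j => (0 < j)%N /\ (gR H Rs theta < j)%N) alpha%:E.
have mB : measurable [set w | alpha%:E <= Etheta F H E theta w].
  rewrite -[X in measurable X]setTI; apply: emeasurable_fun_c_infty => //.
  exact: measurable_fun_FI.
apply: le_trans (e_variable_markov _ (e_variable_Etheta theta) alpha0) => //.
apply: le_measure; rewrite ?inE //.
  by congr measurable: mA; apply/seteqP; split=> w /= [Rs [j]];
     [move=> [[]] | move=> []]; exists Rs, j.
move=> w [Rs [j [_ gRj aD]]] /=.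
exact: le_trans aD (DR_le_FI _ _ _ gRj).
Qed.

End merged_hypotheses.

Theorem mainTheorem2 (d : measure_display) (T : measurableType d) (R : realType)
  (K : nat) (hK : (1 < K)%N)
  (H : 'I_K -> set (probability T R)) (E : 'I_K -> T -> \bar R)
  (hE : forall k, e_variable (H k) (E k))
  (F : seq (\bar R) -> \bar R) (hF : e_merging F) (hFsym : symmetric_fun F) :
  ((forall (Rs : {set 'I_K}) (j : nat), (0 < j)%N -> forall w : T,
      DR F E Rs j w <=
      ereal_inf [set Etheta F H E theta w |
                  theta in [set theta | (gR H Rs theta < j)%N]]) /\
   ((forall I : {set 'I_K}, exists theta : probability T R, Itheta H theta = I) ->
    forall (Rs : {set 'I_K}) (j : nat), (0 < j)%N -> forall w : T,
      DR F E Rs j w =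
      ereal_inf [set Etheta F H E theta w |
                  theta in [set theta | (gR H Rs theta < j)%N]])) /\
  (forall (theta : probability T R) (alpha : R), (0 < alpha)%R ->
     theta [set w | exists (Rs : {set 'I_K}) (j : nat),
                      [/\ (0 < j)%N, (gR H Rs theta < j)%N &
                          alpha%:E <= DR F E Rs j w]]
     <= (alpha^-1)%:E).
Proof.
split; first split.
- by move=> Rs j _ w; exact: DR_le_einf_Etheta.
- by move=> Itheta_onto Rs j _ w; exact: DR_eq_einf_Etheta.
- by move=> theta alpha; exact: DR_exceed_le.
Qed.
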